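(* Let $m\ge0$ be an integer. Every $f\in LC(O,K)$ can be expanded uniquely as $$f(x)=\sum_{n=0}^\infty\beta_n^{(m)}\,\mathcal{D}_n(x)^{q^m}\qquad(x\in O),$$ with $\beta_n^{(m)}\in K$, $\beta_n^{(m)}\to0$, where the coefficients are given by $$\beta_n^{(m)}=\big((\Delta-[m]I)^nf\big)(1)=\sum_{i=0}^n\sum_{j=i}^n(-1)^{n-i}\binom{n}{j}[m]^{n-j}f(T^i)\,\mathcal{D}_i(T^j).$$
   Context: Let $q$ be a prime power, $K=\mathbf{F}_q((T))$, $O=\mathbf{F}_q[[T]]$, with $T$-adic absolute value, and $LC(O,K)$ the $K$-Banach space (sup-norm) of continuous $\mathbf{F}_q$-linear functions $O\to K$. Put $[m]=T^{q^m}-T$ (so $[0]=0$). Hasse derivatives: $\mathcal{D}_n(\sum_ia_iT^i)=\sum_i\binom{i}{n}a_iT^{i-n}$ (binomials in $\mathbf{F}_q$). The Carlitz difference operator $\Delta$ on $LC(O,K)$ is $(\Delta f)(x)=f(Tx)-Tf(x)$, and $I$ is the identity operator; binomial coefficients $\binom{n}{j}$ are read in $\mathbf{F}_q$. *)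

(* K = F_q((T)) as lower-bounded coefficient families
   int -> F_q; O = F_q[[T]] as coefficient sequences nat -> F_q. *)
From HB Require Import structures.
From mathcomp Require Import all_boot all_order all_algebra zify.
From Stdlib Require Import ClassicalEpsilon.
Set Implicit Arguments. Unset Strict Implicit. Unset Printing Implicit Defensive.
Import Order.TTheory GRing.Theory Num.Theory.
Local Open Scope ring_scope.

Section Laurent.
Variable F : finFieldType.   (* F = F_q, q := #|F| *)

Definition lbounded (c : int -> F) :=
  exists N : int, forall i : int, i < N -> c i = 0.

Definition laurent := {c : int -> F | lbounded c}.

Definition coef (x : laurent) : int -> F := proj1_sig x.

Definition lb (x : laurent) : int :=
  proj1_sig (constructive_indefinite_description
    (fun N : int => forall i : int, i < N -> proj1_sig x i = 0) (proj2_sig x)).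

Lemma lbP (x : laurent) (i : int) : i < lb x -> coef x i = 0.
Proof.
rewrite /lb; case: constructive_indefinite_description => /= N HN; exact: HN.
Qed.

Definition kmk (c : int -> F) (N : int) (H : forall i : int, i < N -> c i = 0)
  : laurent := exist _ c (ex_intro _ N H).

Lemma kzero_subproof (i : int) : i < 0 -> (fun _ : int => 0 : F) i = 0.
Proof. by []. Qed.
Definition kzero : laurent := kmk kzero_subproof.

Lemma kone_subproof (i : int) : i < 0 -> (fun k : int => ((k == 0) %:R : F)) i = 0.
Proof. by move=> h; rewrite /= lt_eqF. Qed.
Definition kone : laurent := kmk kone_subproof.

Lemma kT_subproof (i : int) : i < 1 -> (fun k : int => ((k == 1) %:R : F)) i = 0.
Proof. by move=> h; rewrite /= lt_eqF. Qed.
Definition kT : laurent := kmk kT_subproof.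

Lemma kadd_subproof (x y : laurent) (i : int) : i < Num.min (lb x) (lb y) ->
  (fun k => coef x k + coef y k) i = 0.
Proof.
rewrite /= lt_min => /andP[hx hy]; by rewrite !lbP // addr0.
Qed.
Definition kadd (x y : laurent) : laurent := kmk (@kadd_subproof x y).

Lemma kopp_subproof (x : laurent) (i : int) : i < lb x -> (fun k => - coef x k) i = 0.
Proof. by move=> h; rewrite /= lbP // oppr0. Qed.
Definition kopp (x : laurent) : laurent := kmk (@kopp_subproof x).

Lemma kscale_subproof (a : F) (x : laurent) (i : int) : i < lb x ->
  (fun k => a * coef x k) i = 0.
Proof. by move=> h; rewrite /= lbP // mulr0. Qed.
Definition kscale (a : F) (x : laurent) : laurent := kmk (@kscale_subproof a x).

(* Cauchy product: (xy)_k = sum_{lb x <= i <= k - lb y} x_i y_(k-i) *)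
Definition kmul_coef (x y : laurent) (k : int) : F :=
  \sum_(d < (absz (k - lb x - lb y)%R).+1)
     coef x (lb x + (d : nat)%:Z) * coef y (k - lb x - (d : nat)%:Z).

Lemma kmul_subproof (x y : laurent) (i : int) : i < lb x + lb y ->
  kmul_coef x y i = 0.
Proof.
move=> h; rewrite /kmul_coef big1 // => d _.
rewrite (@lbP y) ?mulr0 //; lia.
Qed.
Definition kmul (x y : laurent) : laurent := kmk (@kmul_subproof x y).

Definition kexp (x : laurent) (n : nat) : laurent := iter n (kmul x) kone.

Definition PS := nat -> F.

Definition ps_add (x y : PS) : PS := fun i => x i + y i.
Definition ps_scale (a : F) (x : PS) : PS := fun i => a * x i.
Definition psT (x : PS) : PS := fun i => if i is i'.+1 then x i' else 0.
Definition psX (j : nat) : PS := fun i => (i == j)%:R.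

Lemma ofPS_subproof (c : PS) (i : int) : i < 0 ->
  (fun k : int => match k with Posz n => c n | Negz _ => 0 end) i = 0.
Proof. by case: i. Qed.
Definition ofPS (c : PS) : laurent := kmk (@ofPS_subproof c).

(* Hasse derivative D_n (sum a_i T^i) = sum_i binom(i,n) a_i T^(i-n),
   binomials read in F; coefficient of T^i in D_n x is binom(i+n,n) a_(i+n) *)
Definition hasse (n : nat) (x : PS) : PS := fun i => ('C(i + n, n))%:R * x (i + n)%N.

Definition Flinear (f : PS -> laurent) :=
  (forall x y, f (ps_add x y) = kadd (f x) (f y)) /\
  (forall (a : F) x, f (ps_scale a x) = kscale a (f x)).

(* continuity for the T-adic topologies on O and K *)
Definition Tcontinuous (f : PS -> laurent) :=
  forall (x : PS) (M : int), exists N : nat, forall y : PS,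
    (forall i, (i < N)%N -> y i = x i) ->
    forall k : int, k < M -> coef (f y) k = coef (f x) k.

Definition LC (f : PS -> laurent) := Flinear f /\ Tcontinuous f.

Definition bracket (m : nat) : laurent := kadd (kexp kT (#|F| ^ m)) (kopp kT).

Definition Delta (g : PS -> laurent) : PS -> laurent :=
  fun x => kadd (g (psT x)) (kopp (kmul kT (g x))).

Definition DeltaMinus (m : nat) (g : PS -> laurent) : PS -> laurent :=
  fun x => kadd (Delta g x) (kopp (kmul (bracket m) (g x))).

Definition ktends0 (b : nat -> laurent) :=
  forall M : int, exists N : nat, forall n, (N <= n)%N ->
    forall k : int, k < M -> coef (b n) k = 0.

Definition kpartial (s : nat -> laurent) (n : nat) : laurent :=
  \big[kadd/kzero]_(i < n) s i.

Definition kseries (s : nat -> laurent) (l : laurent) :=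
  ktends0 (fun n => kadd (kpartial s n) (kopp l)).

End Laurent.

(* Write [S] for the shift [(S g)(x) = g (T x)] and [t = T^(q^m)].  Then [Delta - [m] I = S - t I],
   so [beta_n = ((S - t)^n f)(1)], and inverting this binomial expansion gives
   [f(T^j) = sum_(n <= j) C(j, n) t^(j - n) beta_n]; expanding [(S - t)^n = ((S - T) - [m])^n]
   instead gives the explicit double sum.  Since [D_n(T^j)^(q^m) = C(j, n) t^(j - n)] and
   [x |-> D_n(x)^(q^m)] is F_q-linear (Frobenius), the series equals [f] on polynomials.
   Continuity gives [f(T^i) -> 0], hence [beta_n -> 0], so the series converges to [f] everywhere;
   it is unique because its values at the [T^j] form a triangular system with unit diagonal. *)

From HB Require Import structures.
From mathcomp Require Import all_boot all_order all_algebra zify ring.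
From mathcomp Require Import finfield boolp.
Set Implicit Arguments. Unset Strict Implicit. Unset Printing Implicit Defensive.
Import Order.TTheory GRing.Theory Num.Theory.
Local Open Scope ring_scope.

Section LaurentRing.
Variable F : finFieldType.
Local Notation K := (laurent F).

Lemma eq_laurent (x y : K) : coef x =1 coef y -> x = y.
Proof.
case: x y => [c Hc] [d Hd] /= /funext E; subst d.
by congr exist; exact: Prop_irrelevance.
Qed.

Definition vge (x : K) (M : int) := forall k : int, k < M -> coef x k = 0.

Lemma vge_lb (x : K) : vge x (lb x).
Proof. move=> k; exact: lbP. Qed.

Lemma vge_le (x : K) M M' : vge x M -> M' <= M -> vge x M'.
Proof. move=> H le k kM; apply: H; lia. Qed.

Lemma eq_laurent_ge (u v : K) L : vge u L -> vge v L ->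
  (forall n : nat, coef u (L + n%:Z) = coef v (L + n%:Z)) -> u = v.
Proof.
move=> hu hv H; apply: eq_laurent => k; case: (ltP k L) => h; first by rewrite hu ?hv.
by have -> : k = L + (absz (k - L)%R)%:Z by lia.
Qed.

Lemma coef_kadd (x y : K) k : coef (kadd x y) k = coef x k + coef y k.
Proof. by []. Qed.

Lemma vge_kadd (x y : K) M : vge x M -> vge y M -> vge (kadd x y) M.
Proof. by move=> hx hy k hk; rewrite /= hx ?hy ?addr0. Qed.

Lemma vge_kopp (x : K) M : vge x M -> vge (kopp x) M.
Proof. by move=> hx k hk; rewrite /= hx ?oppr0. Qed.

Lemma vge_kone : vge (kone F) 0.
Proof. by move=> [] //. Qed.

Section CauchyWindow.
Variables (x y : K) (k : int).

(* [kmul_coef x y k] is [window (lb x) (width (lb x) (lb y))]. *)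
Definition window (A : int) (n : nat) :=
  \sum_(d < n) coef x (A + d%:Z) * coef y (k - A - d%:Z).

Local Notation width A C := (absz (k - A - C)%R).+1.

Lemma window_lower A n : coef x (A - 1) = 0 -> window (A - 1) n.+1 = window A n.
Proof.
move=> hx; rewrite /window big_ord_recl /= addr0 hx mul0r add0r.
apply: eq_bigr => d _; rewrite /bump /=.
have -> : A - 1 + (1 + d)%N%:Z = A + d%:Z by lia.
by have -> : k - (A - 1) - (1 + d)%N%:Z = k - A - d%:Z by lia.
Qed.

Lemma window_extend A n : coef y (k - A - n%:Z) = 0 -> window A n.+1 = window A n.
Proof. by move=> hy; rewrite /window big_ord_recr /= hy mulr0 addr0. Qed.

Lemma window_lower_bounds A C (i j : nat) : vge x A -> vge y C -> A + C <= k ->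
  window (A - i%:Z) (width (A - i%:Z) (C - j%:Z)) = window A (width A C).
Proof.
move=> hx hy hk; elim: j => [|j IH].
  elim: i => [|i IH]; first by rewrite !subr0.
  have -> : A - i.+1%:Z = A - i%:Z - 1 by lia.
  have -> : width (A - i%:Z - 1) (C - 0%:Z) = (width (A - i%:Z) (C - 0%:Z)).+1 by lia.
  by rewrite window_lower // hx //; lia.
have -> : width (A - i%:Z) (C - j.+1%:Z) = (width (A - i%:Z) (C - j%:Z)).+1 by lia.
by rewrite window_extend ?IH // hy //; lia.
Qed.

Lemma window_indep A C a b : vge x A -> vge y C -> A + C <= k ->
  vge x a -> vge y b -> a + b <= k -> window A (width A C) = window a (width a b).
Proof.
move=> hx hy hk hx' hy' hk'.
pose A0 := Num.min A a; pose C0 := Num.min C b.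
rewrite -(window_lower_bounds (absz (A - A0)) (absz (C - C0)) hx hy hk).
rewrite -(window_lower_bounds (absz (a - A0)) (absz (b - C0)) hx' hy' hk').
have -> : A - (absz (A - A0))%:Z = a - (absz (a - A0))%:Z by rewrite /A0; lia.
by have -> : C - (absz (C - C0))%:Z = b - (absz (b - C0))%:Z by rewrite /C0; lia.
Qed.

Lemma coef_kmul_window A C : vge x A -> vge y C -> A + C <= k ->
  coef (kmul x y) k = window A (width A C).
Proof.
move=> hx hy hk; case: (ltP k (lb x + lb y)) => h.
  rewrite /= kmul_subproof // /window big1 // => d _.
  case: (ltP (A + d%:Z) (lb x)) => h'; first by rewrite lbP ?mul0r.
  by rewrite (@lbP _ y) ?mulr0 //; lia.
by rewrite (window_indep hx hy hk (@vge_lb x) (@vge_lb y) h).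
Qed.
End CauchyWindow.

Lemma vge_kmul (x y : K) A C : vge x A -> vge y C -> vge (kmul x y) (A + C).
Proof.
move=> hx hy k hk; case: (ltP k (lb x + lb y)) => h; first exact: kmul_subproof.
rewrite (coef_kmul_window (@vge_lb x) (@vge_lb y) h) /window big1 // => d _.
case: (ltP (lb x + d%:Z) A) => h1; first by rewrite hx ?mul0r.
by rewrite hy ?mulr0 //; lia.
Qed.

Definition lpoly (x : K) (A : int) (B : nat) : {poly F} :=
  \poly_(i < B) coef x (A + i%:Z).

Lemma coef_kmul_lpoly (x y : K) A C (n B : nat) : vge x A -> vge y C -> (n < B)%N ->
  coef (kmul x y) (A + C + n%:Z) = (lpoly x A B * lpoly y C B)`_n.
Proof.
move=> hx hy hB; rewrite (coef_kmul_window hx hy) ?lerDl // coefM /window.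
have -> : absz (A + C + n%:Z - A - C)%R = n by lia.
apply: eq_bigr => [[d hd]] _ /=; rewrite !coef_poly.
have -> : (d < B)%N by lia.
have -> : (n - d < B)%N by lia.
by have -> : A + C + n%:Z - A - d%:Z = C + (n - d)%N%:Z by lia.
Qed.

Lemma lpoly_kmul (x y : K) A C (B d : nat) : vge x A -> vge y C -> (d < B)%N ->
  (lpoly (kmul x y) (A + C) B)`_d = (lpoly x A B * lpoly y C B)`_d.
Proof. by move=> hx hy hd; rewrite coef_poly hd -(coef_kmul_lpoly hx hy hd). Qed.

Lemma lpoly_kadd (x y : K) A B : lpoly (kadd x y) A B = lpoly x A B + lpoly y A B.
Proof. by apply/polyP => i; rewrite coefD !coef_poly; case: ifP; rewrite ?addr0. Qed.

Lemma lpoly_kone B : (0 < B)%N -> lpoly (kone F) 0 B = 1.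
Proof.
move=> hB; apply/polyP => -[|i]; rewrite coef_poly coef1 ?hB //=.
by case: ifP.
Qed.

Lemma kaddA : associative (@kadd F).
Proof. by move=> x y z; apply: eq_laurent => k; rewrite /= addrA. Qed.
Lemma kaddC : commutative (@kadd F).
Proof. by move=> x y; apply: eq_laurent => k; rewrite /= addrC. Qed.
Lemma kadd0 : left_id (kzero F) (@kadd F).
Proof. by move=> x; apply: eq_laurent => k; rewrite /= add0r. Qed.
Lemma kaddN : left_inverse (kzero F) (@kopp F) (@kadd F).
Proof. by move=> x; apply: eq_laurent => k; rewrite /= addNr. Qed.

Lemma kmulA : associative (@kmul F).
Proof.
move=> x y z; set a := lb x; set b := lb y; set c := lb z.
have hx := @vge_lb x; have hy := @vge_lb y; have hz := @vge_lb z.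
apply: (@eq_laurent_ge _ _ (a + b + c)).
- by rewrite -addrA; apply: vge_kmul => //; apply: vge_kmul.
- by apply: vge_kmul => //; apply: vge_kmul.
move=> n; rewrite (coef_kmul_lpoly (B := n.+1) (vge_kmul hx hy) hz) //.
rewrite -[a + b + c]addrA (coef_kmul_lpoly (B := n.+1) hx (vge_kmul hy hz)) //.
set p := lpoly x a n.+1; set q := lpoly y b n.+1; set r := lpoly z c n.+1.
have -> : (lpoly (kmul x y) (a + b) n.+1 * r)`_n = (p * q * r)`_n.
  by rewrite !coefM; apply: eq_bigr => -[d hd] _; rewrite lpoly_kmul.
have -> : (p * lpoly (kmul y z) (b + c) n.+1)`_n = (p * (q * r))`_n.
  by rewrite !coefM; apply: eq_bigr => -[d hd] _; rewrite lpoly_kmul //; lia.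
by rewrite mulrA.
Qed.

Lemma kmulC : commutative (@kmul F).
Proof.
move=> x y; have hx := @vge_lb x; have hy := @vge_lb y.
apply: (@eq_laurent_ge _ _ (lb x + lb y)); first exact: vge_kmul.
  by rewrite addrC; apply: vge_kmul.
move=> n; rewrite (coef_kmul_lpoly (B := n.+1) hx hy) //.
by rewrite [lb x + _]addrC (coef_kmul_lpoly (B := n.+1) hy hx) // mulrC.
Qed.

Lemma kmul1 : left_id (kone F) (@kmul F).
Proof.
move=> x; have hx := @vge_lb x.
apply: (@eq_laurent_ge _ _ (0 + lb x)); first exact: vge_kmul vge_kone hx.
  by rewrite add0r.
move=> n; rewrite (coef_kmul_lpoly (B := n.+1) vge_kone hx) // lpoly_kone // mul1r.
by rewrite coef_poly ltnSn add0r.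
Qed.

Lemma kmulDl : left_distributive (@kmul F) (@kadd F).
Proof.
move=> x y z; set A := Num.min (lb x) (lb y).
have hx : vge x A by apply: vge_le (@vge_lb x) _; rewrite /A; lia.
have hy : vge y A by apply: vge_le (@vge_lb y) _; rewrite /A; lia.
have hz := @vge_lb z.
apply: (@eq_laurent_ge _ _ (A + lb z)); first exact/vge_kmul/hz/vge_kadd.
  by apply: vge_kadd; apply: vge_kmul.
move=> n; rewrite (coef_kmul_lpoly (B := n.+1) (vge_kadd hx hy) hz) // coef_kadd.
rewrite (coef_kmul_lpoly (B := n.+1) hx hz) // (coef_kmul_lpoly (B := n.+1) hy hz) //.
by rewrite lpoly_kadd mulrDl coefD.
Qed.

HB.instance Definition _ := gen_eqMixin K.
HB.instance Definition _ := gen_choiceMixin K.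
HB.instance Definition _ := GRing.isZmodule.Build K kaddA kaddC kadd0 kaddN.

Lemma kone_neq0 : kone F != kzero F.
Proof. by apply/eqP => /(congr1 (fun u : K => coef u 0)) /= /eqP; rewrite oner_eq0. Qed.

HB.instance Definition _ :=
  GRing.Zmodule_isComNzRing.Build K kmulA kmulC kmul1 kmulDl kone_neq0.

Lemma kaddE (x y : K) : kadd x y = x + y. Proof. by []. Qed.
Lemma koppE (x : K) : kopp x = - x. Proof. by []. Qed.
Lemma kmulE (x y : K) : kmul x y = x * y. Proof. by []. Qed.

Lemma kexpE (x : K) n : kexp x n = x ^+ n.
Proof. by elim: n => [|n IH] //; rewrite exprS -IH. Qed.

Lemma big_kaddE I (r : seq I) (P : pred I) (G : I -> K) :
  \big[@kadd F/kzero F]_(i <- r | P i) G i = \sum_(i <- r | P i) G i.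
Proof. by []. Qed.

Definition kC (a : F) : K := kscale a 1.

Lemma coef_kC a k : coef (kC a) k = a * (k == 0)%:R.
Proof. by []. Qed.

Lemma vge_kC a : vge (kC a) 0.
Proof. by move=> [] // n _; rewrite coef_kC mulr0. Qed.

Lemma coef_kCM a (x : K) k : coef (kC a * x) k = a * coef x k.
Proof.
have hx := @vge_lb x; case: (ltP k (0 + lb x)) => h.
  by rewrite (vge_kmul (vge_kC a) hx) // hx ?mulr0 //; lia.
set n := absz (k - (0 + lb x))%R; have -> : k = 0 + lb x + n%:Z by lia.
rewrite (coef_kmul_lpoly (B := n.+1) (vge_kC a) hx) //.
have -> : lpoly (kC a) 0 n.+1 = a%:P.
  by apply/polyP => -[|i]; rewrite coef_poly coefC coef_kC ?mulr1 ?mulr0 ?if_same.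
by rewrite coefCM coef_poly ltnSn add0r.
Qed.

Lemma kscaleE a (x : K) : kscale a x = kC a * x.
Proof. by apply: eq_laurent => k; rewrite coef_kCM. Qed.

Lemma kC_is_zmod_morphism : zmod_morphism kC.
Proof. by move=> a b; apply: eq_laurent => k; rewrite /= !mulrBl. Qed.

Lemma kC_is_monoid_morphism : monoid_morphism kC.
Proof.
split; first by apply: eq_laurent => k; rewrite coef_kC mul1r.
by move=> a b; apply: eq_laurent => k; rewrite coef_kCM !coef_kC mulrA.
Qed.

HB.instance Definition _ := GRing.isZmodMorphism.Build F K kC kC_is_zmod_morphism.
HB.instance Definition _ := GRing.isMonoidMorphism.Build F K kC kC_is_monoid_morphism.

Definition qm (m : nat) := (#|F| ^ m)%N.

Lemma qm_gt0 m : (0 < qm m)%N.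
Proof. by rewrite expn_gt0 (ltnW (finNzRing_gt1 F)). Qed.

Lemma expf_qm m (a : F) : a ^+ qm m = a.
Proof. by elim: m => [|m IH]; rewrite ?expr1 // /qm expnSr exprM IH expf_card. Qed.

Lemma pchar_nat_qm m : [pchar K].-nat (qm m).
Proof.
have [p _ hp] := finPcharP F.
rewrite (eq_pnat _ (pcharf_eq (rmorph_pchar kC hp))) pnatX.
by rewrite (card_pprimeChar hp) pnatX pnat_id ?(pcharf_prime hp).
Qed.

Lemma frobD m (x y : K) : (x + y) ^+ qm m = x ^+ qm m + y ^+ qm m.
Proof. exact/exprDn_pchar/pchar_nat_qm. Qed.

Lemma kC_expqm m a : kC a ^+ qm m = kC a.
Proof. by rewrite -rmorphXn expf_qm. Qed.

Local Notation T := (kT F).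

Lemma vge_kT : vge T 1.
Proof. by move=> k hk; rewrite /= (_ : (k == 1) = false) //; lia. Qed.

Lemma coef_kTM (y : K) l : coef (T * y) l = coef y (l - 1).
Proof.
have hy := @vge_lb y; case: (ltP l (1 + lb y)) => h.
  by rewrite (vge_kmul vge_kT hy) // hy //; lia.
set n := absz (l - (1 + lb y))%R; have -> : l = 1 + lb y + n%:Z by lia.
rewrite (coef_kmul_lpoly (B := n.+1) vge_kT hy) //.
have -> : lpoly T 1 n.+1 = 1.
  apply/polyP => -[|i]; rewrite coef_poly coef1 //=.
  by case: ifP => // _; rewrite (_ : (1 + i.+1%:Z == 1) = false) //; lia.
by rewrite mul1r coef_poly ltnSn; congr coef; lia.
Qed.

Lemma coef_kTX j k : coef (T ^+ j) k = (k == j%:Z)%:R.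
Proof.
elim: j k => [|j IH] k; first by [].
by rewrite exprS coef_kTM IH; congr (_%:R); lia.
Qed.

Lemma vge_kTX j : vge (T ^+ j) j%:Z.
Proof. by move=> k hk; rewrite coef_kTX (_ : (k == j%:Z) = false) //; lia. Qed.

Lemma vge_ofPS (c : PS F) : vge (ofPS c) 0.
Proof. by move=> [] // n. Qed.

Lemma hasse_psX i j : ofPS (hasse i (psX F j)) =
  if (i <= j)%N then kC 'C(j, i)%:R * T ^+ (j - i) else 0.
Proof.
apply: eq_laurent => k; case: ifP => hij.
  rewrite coef_kCM coef_kTX; case: k => [l|l]; last by rewrite mulr0.
  rewrite /= /hasse /psX; case: (eqVneq (l + i)%N j) => [<-|ne].
    by rewrite addnK eqxx.
  by rewrite (_ : (Posz l == (j - i)%N%:Z) = false) ?mulr0 //; lia.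
case: k => [l|l] //=; rewrite /hasse /psX.
by rewrite (_ : ((l + i)%N == j) = false) ?mulr0 //; lia.
Qed.

Lemma vge_exp (x : K) A n : vge x A -> vge (x ^+ n) (A * n%:Z).
Proof.
move=> hx; elim: n => [|n IH]; first by rewrite mulr0; exact: vge_kone.
by rewrite exprS (_ : A * n.+1%:Z = A + A * n%:Z); [exact: vge_kmul | lia].
Qed.

Lemma vge_sum I (r : seq I) (P : pred I) (G : I -> K) M :
  (forall i, P i -> vge (G i) M) -> vge (\sum_(i <- r | P i) G i) M.
Proof.
by move=> H; elim/big_rec: _ => [|i y hi hy]; [move | exact: vge_kadd (H i hi) hy].
Qed.

Lemma vge_natmul (x : K) n M : vge x M -> vge (x *+ n) M.
Proof.
by move=> hx; elim: n => [|n IH]; [move=> k | rewrite mulrS; exact: vge_kadd].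
Qed.

End LaurentRing.

Section ShiftCalculus.
Variables (R : comNzRingType) (X : Type) (s : X -> X) (h : X -> R) (x : X).

(* [hornerS p] is [(p(S) h)(x)], where [S] is the shift operator [(S h)(y) = h (s y)]. *)
Definition hornerS (p : {poly R}) : R := \sum_(i < size p) p`_i * h (iter i s x).

Lemma hornerS_window (p : {poly R}) N : (size p <= N)%N ->
  hornerS p = \sum_(i < N) p`_i * h (iter i s x).
Proof.
move=> hN; rewrite /hornerS (big_ord_widen N (fun i => p`_i * h (iter i s x)) hN).
rewrite big_mkcond /=; apply: eq_bigr => i _; case: ifP => // hi.
by rewrite nth_default ?mul0r // leqNgt hi.
Qed.

Lemma hornerS_is_zmod_morphism : zmod_morphism hornerS.
Proof.
move=> p q; set N := maxn (size p) (size q).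
rewrite (@hornerS_window (p - q) N) ?(leq_trans (size_polyD p (- q))) ?size_polyN //.
rewrite (@hornerS_window p N) ?leq_maxl // (@hornerS_window q N) ?leq_maxr //.
by rewrite -sumrB; apply: eq_bigr => i _; rewrite coefB mulrBl.
Qed.

HB.instance Definition _ :=
  GRing.isZmodMorphism.Build {poly R} R hornerS hornerS_is_zmod_morphism.

Lemma hornerSCM c p : hornerS (c%:P * p) = c * hornerS p.
Proof.
rewrite (@hornerS_window _ (size p)); last by rewrite mul_polyC size_scale_leq.
by rewrite /hornerS mulr_sumr; apply: eq_bigr => i _; rewrite coefCM mulrA.
Qed.

Lemma hornerSXn k : hornerS 'X^k = h (iter k s x).
Proof.
rewrite /hornerS size_polyXn big_ord_recr /= coefXn eqxx mul1r big1 ?add0r //.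
by move=> [i hi] _ /=; rewrite coefXn (_ : (i == k) = false) ?mul0r //; lia.
Qed.

Lemma hornerS_binom q c n : hornerS ((q + c%:P) ^+ n) =
  \sum_(i < n.+1) (c ^+ (n - i) * hornerS (q ^+ i)) *+ 'C(n, i).
Proof.
rewrite addrC exprDn raddf_sum; apply: eq_bigr => i _.
by rewrite raddfMn -rmorphXn /= hornerSCM.
Qed.

End ShiftCalculus.

Lemma hornerSXM (R : comNzRingType) (X : Type) (s : X -> X) (h : X -> R) x p :
  hornerS s h x ('X * p) = hornerS s h (s x) p.
Proof.
rewrite (@hornerS_window _ _ _ _ _ _ (size p).+1); last first.
  by apply: leq_trans (size_polyMleq _ _) _; rewrite size_polyX.
rewrite big_ord_recl /= coefXM eqxx mul0r add0r /hornerS.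
by apply: eq_bigr => i _; rewrite coefXM /= add0n -iterSr.
Qed.

Lemma iter_psT (F : finFieldType) j : iter j (@psT F) (psX F 0) = psX F j.
Proof. by elim: j => [|j IH] //=; rewrite IH; apply: funext => -[|i]. Qed.

Lemma exchange_big_triangle (V : nmodType) n (G : nat -> nat -> V) :
  \sum_(j < n.+1) \sum_(i < j.+1) G i j = \sum_(i < n.+1) \sum_(i <= j < n.+1) G i j.
Proof.
transitivity (\sum_(j < n.+1) \sum_(i < n.+1) (if (i <= j)%N then G i j else 0)).
  by apply: eq_bigr => j _; rewrite (big_ord_widen n.+1 (G^~ j)) // big_mkcond.
by rewrite exchange_big; apply: eq_bigr => i _; rewrite big_geq_mkord [RHS]big_mkcond.
Qed.

Section Coefficients.
Variables (F : finFieldType) (m : nat) (f : PS F -> laurent F).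
Local Notation K := (laurent F).
Local Notation T := (kT F).
Local Notation t := (T ^+ qm F m).
Local Notation beta n := (iter n (@DeltaMinus F m) f (psX F 0)).

Lemma DeltaMinusE (h : PS F -> K) x : DeltaMinus m h x = h (psT x) - t * h x.
Proof.
by rewrite /DeltaMinus /Delta /bracket !kaddE !koppE !kmulE kexpE; ring.
Qed.

Lemma iter_DeltaMinus n x :
  iter n (@DeltaMinus F m) f x = hornerS (@psT F) f x (('X + (- t)%:P) ^+ n).
Proof.
elim: n x => [|n IH] x; first by rewrite expr0 -(expr0 'X) hornerSXn.
by rewrite iterS DeltaMinusE exprS mulrDl raddfD /= hornerSXM hornerSCM !IH mulNr.
Qed.

Lemma beta_expand n :
  beta n = \sum_(i < n.+1) ((- t) ^+ (n - i) * f (psX F i)) *+ 'C(n, i).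
Proof.
rewrite iter_DeltaMinus hornerS_binom; apply: eq_bigr => i _.
by rewrite hornerSXn iter_psT.
Qed.

Lemma f_psX_expand j :
  f (psX F j) = \sum_(i < j.+1) (t ^+ (j - i) * beta i) *+ 'C(j, i).
Proof.
rewrite -iter_psT -hornerSXn.
have -> : 'X = 'X + (- t)%:P + t%:P :> {poly K} by rewrite rmorphN subrK.
by rewrite hornerS_binom; under eq_bigr do rewrite -iter_DeltaMinus.
Qed.

Lemma beta_formula n :
  beta n =
  \big[@kadd F/kzero F]_(i < n.+1) \big[@kadd F/kzero F]_(i <= j < n.+1)
     kscale ((-1) ^+ (n - i) * ('C(n, j))%:R)
       (kmul (kexp (bracket F m) (n - j))
             (kmul (f (psX F i)) (ofPS (hasse i (psX F j))))).
Proof.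
rewrite big_kaddE; under eq_bigr do rewrite big_kaddE.
pose G i j := kscale ((-1) ^+ (n - i) * ('C(n, j))%:R)
  (kmul (kexp (bracket F m) (n - j)) (kmul (f (psX F i)) (ofPS (hasse i (psX F j))))).
rewrite -(exchange_big_triangle n G) iter_DeltaMinus.
have -> : 'X + (- t)%:P = 'X + (- T)%:P + (- bracket F m)%:P.
  by rewrite -addrA -rmorphD /bracket kaddE koppE kexpE; congr (_ + _%:P); ring.
rewrite hornerS_binom; apply: eq_bigr => -[j /=]; rewrite ltnS => hj _.
rewrite hornerS_binom mulr_sumr -sumrMnl; apply: eq_bigr => -[i /=]; rewrite ltnS => hij _.
rewrite /G hornerSXn iter_psT kscaleE kexpE hasse_psX hij rmorphM rmorphXn rmorphN.
rewrite rmorph1 !rmorph_nat !kmulE (_ : n - i = n - j + (j - i))%N; last by lia.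
rewrite exprD (exprNn (bracket F m)) (exprNn T).
by rewrite -(mulr_natr _ 'C(n, j)) -(mulr_natr _ 'C(j, i)); ring.
Qed.

End Coefficients.

Section LinearMaps.
Variable F : finFieldType.
Local Notation K := (laurent F).

Definition ps_trunc (N : nat) (x : PS F) : PS F := fun i => if (i < N)%N then x i else 0.
Definition ps_tail (N : nat) (x : PS F) : PS F := fun i => if (i < N)%N then 0 else x i.

Lemma ps_split N (x : PS F) : x = ps_add (ps_trunc N x) (ps_tail N x).
Proof.
by apply: funext => i; rewrite /ps_add /ps_trunc /ps_tail; case: ifP; rewrite ?addr0 ?add0r.
Qed.

Lemma Flinear0 (h : PS F -> K) : Flinear h -> h (fun _ => 0) = 0.
Proof.
case=> _ hZ; have -> : (fun _ : nat => 0 : F) = ps_scale 0 (fun _ => 0).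
  by apply: funext => i; rewrite /ps_scale mul0r.
by rewrite hZ kscaleE rmorph0 mul0r.
Qed.

Lemma Flinear_trunc (h : PS F -> K) N (x : PS F) : Flinear h ->
  h (ps_trunc N x) = \sum_(j < N) kC (x j) * h (psX F j).
Proof.
move=> hl; elim: N => [|N IH].
  by rewrite big_ord0 -(Flinear0 hl); congr h; apply: funext.
have -> : ps_trunc N.+1 x = ps_add (ps_trunc N x) (ps_scale (x N) (psX F N)).
  apply: funext => i; rewrite /ps_trunc /ps_add /ps_scale /psX ltnS leq_eqVlt.
  by case: eqP => [->|_] /=; rewrite ?ltnn ?mulr1 ?add0r ?mulr0 ?addr0.
by case: hl => hD hZ; rewrite hD hZ IH big_ord_recr kscaleE.
Qed.

End LinearMaps.

Section Convergence.
Variable F : finFieldType.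
Local Notation K := (laurent F).

Lemma ktends0_bounded (b : nat -> K) : ktends0 b -> exists L, forall n, vge (b n) L.
Proof.
move=> /(_ 0) [N HN].
have [L HL] : exists L, forall n, (n < N)%N -> vge (b n) L.
  elim: N {HN} => [|N [L HL]]; first by exists 0.
  exists (Num.min L (lb (b N))) => n; rewrite ltnS leq_eqVlt => /orP[/eqP->|hn].
    by apply: vge_le (@vge_lb _ (b N)) _; lia.
  by apply: vge_le (HL n hn) _; lia.
exists (Num.min L 0) => n; case: (ltnP n N) => h.
  by apply: vge_le (HL n h) _; lia.
by apply: vge_le (HN n h) _; lia.
Qed.

Lemma LC_psX_tends0 (h : PS F -> K) : LC h -> ktends0 (fun i => h (psX F i)).
Proof.
case=> hl hc M; have [N HN] := hc (fun _ => 0) M; exists N => i hi k hk.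
rewrite (HN (psX F i)) ?(Flinear0 hl) // => l hl'.
by rewrite /psX (_ : (l == i) = false) //; lia.
Qed.

Lemma kseries_eventually_const (s : nat -> K) l c J :
  (forall N, (J <= N)%N -> kpartial s N = c) -> kseries s l -> l = c.
Proof.
move=> Hc Hs; apply: eq_laurent => k; have [N0 HN0] := Hs (k + 1).
have := HN0 (maxn N0 J) (leq_maxl _ _) k (ltr_pwDr ltr01 (lexx k)).
by rewrite coef_kadd Hc ?leq_maxr // => /eqP; rewrite subr_eq0 => /eqP.
Qed.

End Convergence.

Section Expansion.
Variables (F : finFieldType) (m : nat) (f : PS F -> laurent F).
Hypothesis f_LC : LC f.
Local Notation K := (laurent F).
Local Notation T := (kT F).
Local Notation t := (T ^+ qm F m).
Local Notation beta n := (iter n (@DeltaMinus F m) f (psX F 0)).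

Definition hasse_qm n (x : PS F) : K := ofPS (hasse n x) ^+ qm F m.

Lemma Flinear_hasse_qm n : Flinear (hasse_qm n).
Proof.
have hD x y : ofPS (hasse n (ps_add x y)) = ofPS (hasse n x) + ofPS (hasse n y).
  by apply: eq_laurent => -[l|l] /=; rewrite ?addr0 // /hasse /ps_add mulrDr.
have hZ a x : ofPS (hasse n (ps_scale a x)) = kC a * ofPS (hasse n x).
  by apply: eq_laurent => -[l|l]; rewrite coef_kCM /= ?mulr0 // /hasse /ps_scale mulrCA.
split=> [x y|a x]; rewrite /hasse_qm ?hD ?hZ ?kscaleE; first exact: frobD.
by rewrite exprMn kC_expqm.
Qed.

Lemma vge_hasse_qm n x : vge (hasse_qm n x) 0.
Proof. by have := vge_exp (n := qm F m) (vge_ofPS (hasse n x)); rewrite mul0r. Qed.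

Lemma vge_hasse_qm_tail n N x : vge (hasse_qm n (ps_tail N x)) (N%:Z - n%:Z).
Proof.
case: (leqP n N) => hnN; last by apply: vge_le (vge_hasse_qm n _) _; lia.
have h1 : vge (ofPS (hasse n (ps_tail N x))) (N%:Z - n%:Z).
  move=> [l|l] hk //=; rewrite /hasse /ps_tail.
  by rewrite (_ : (l + n < N)%N) ?mulr0 //; lia.
apply: vge_le (vge_exp (n := qm F m) h1) _.
by have := qm_gt0 F m; nia.
Qed.

Lemma hasse_qm_psX n j : hasse_qm n (psX F j) =
  if (n <= j)%N then kC 'C(j, n)%:R * t ^+ (j - n) else 0.
Proof.
rewrite /hasse_qm hasse_psX; case: ifP => _.
  by rewrite exprMn kC_expqm -exprM mulnC exprM.
by rewrite expr0n; case: (qm F m) (qm_gt0 F m).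
Qed.

Lemma sum_hasse_qm_psX (c : nat -> K) N j : (j < N)%N ->
  \sum_(n < N) c n * hasse_qm n (psX F j) =
  \sum_(n < j.+1) c n * (kC 'C(j, n)%:R * t ^+ (j - n)).
Proof.
move=> hj; rewrite (big_ord_widen N (fun n => c n * (kC 'C(j, n)%:R * t ^+ (j - n)))) //.
rewrite [RHS]big_mkcond; apply: eq_bigr => n _; rewrite hasse_qm_psX ltnS.
by case: ifP => //; rewrite mulr0.
Qed.

Lemma sum_beta_hasse_qm_psX N j : (j < N)%N ->
  \sum_(n < N) beta n * hasse_qm n (psX F j) = f (psX F j).
Proof.
move=> hj; rewrite (sum_hasse_qm_psX (fun n => beta n) hj) (f_psX_expand m).
by apply: eq_bigr => n _; rewrite rmorph_nat; ring.
Qed.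

Lemma beta_tends0 : ktends0 (fun n => beta n).
Proof.
have hfX := LC_psX_tends0 f_LC; have [L HL] := ktends0_bounded hfX.
have ht : vge (- t) 1.
  by apply/vge_kopp/vge_le; [exact: vge_kTX | have := qm_gt0 F m; lia].
move=> M; have [I HI] := hfX M; exists (I + absz (M - L))%N => n hn.
rewrite (beta_expand m); apply: vge_sum => -[i /= hin] _; apply: vge_natmul.
have hp := vge_exp (n := (n - i)%N) ht.
case: (leqP I i) => hi.
  by apply: vge_le (vge_kmul hp (HI i hi)) _; lia.
by apply: vge_le (vge_kmul hp (HL i)) _; lia.
Qed.

Lemma sum_beta_hasse_qm_trunc N N' x : (N' <= N)%N ->
  \sum_(n < N) beta n * hasse_qm n (ps_trunc N' x) = f (ps_trunc N' x).
Proof.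
case: f_LC => hl _ hN; rewrite (Flinear_trunc _ _ hl).
under eq_bigr do rewrite (Flinear_trunc _ _ (Flinear_hasse_qm _)) mulr_sumr.
rewrite exchange_big; apply: eq_bigr => j _.
under eq_bigr do rewrite mulrCA; rewrite -mulr_sumr.
by rewrite sum_beta_hasse_qm_psX // (leq_trans (ltn_ord j)).
Qed.

Lemma beta_expansion x :
  kseries (fun n => kmul (beta n) (kexp (ofPS (hasse n x)) (qm F m))) (f x).
Proof.
have [Lb HLb] := ktends0_bounded beta_tends0.
move=> M; have [n0 Hn0] := beta_tends0 M; have [Nc HNc] := f_LC.2 x M.
set N' := maxn Nc (n0 + absz (M - Lb)); exists N' => N hN.
have -> : kpartial (fun n => kmul (beta n) (kexp (ofPS (hasse n x)) (qm F m))) N =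
    \sum_(n < N) beta n * hasse_qm n x.
  by rewrite /kpartial big_kaddE; apply: eq_bigr => n _; rewrite kexpE.
have -> : \sum_(n < N) beta n * hasse_qm n x =
    f (ps_trunc N' x) + \sum_(n < N) beta n * hasse_qm n (ps_tail N' x).
  rewrite -(sum_beta_hasse_qm_trunc x hN) -big_split; apply: eq_bigr => n _.
  by rewrite {1}(ps_split N' x) (Flinear_hasse_qm n).1 kaddE mulrDr.
have small_tail : vge (\sum_(n < N) beta n * hasse_qm n (ps_tail N' x)) M.
  apply: vge_sum => n _; case: (ltnP n n0) => hn.
    by apply: vge_le (vge_kmul (HLb n) (vge_hasse_qm_tail (n := n) (N := N') x)) _; lia.
  by apply: vge_le (vge_kmul (Hn0 n hn) (vge_hasse_qm n _)) _; lia.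
move=> k hk; rewrite !coef_kadd small_tail // addr0 (HNc (ps_trunc N' x)) ?subrr //.
by move=> i hi; rewrite /ps_trunc (_ : (i < N')%N) //; lia.
Qed.

Lemma kseries_hasse_qm_psX (c : nat -> K) j :
  kseries (fun n => kmul (c n) (kexp (ofPS (hasse n (psX F j))) (qm F m))) (f (psX F j)) ->
  f (psX F j) = \sum_(n < j.+1) c n * (kC 'C(j, n)%:R * t ^+ (j - n)).
Proof.
apply: (kseries_eventually_const (J := j.+1)) => N hN.
rewrite /kpartial big_kaddE -(sum_hasse_qm_psX c hN).
by apply: eq_bigr => n _; rewrite kexpE.
Qed.

Lemma beta_expansion_unique (gamma : nat -> K) :
  (forall x, kseries (fun n => kmul (gamma n) (kexp (ofPS (hasse n x)) (qm F m))) (f x)) ->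
  gamma = fun n => beta n.
Proof.
move=> hgamma; apply: funext => n; elim/ltn_ind: n => j IH.
have := kseries_hasse_qm_psX (hgamma (psX F j)).
rewrite -{1}(sum_beta_hasse_qm_psX (ltnSn j)) (sum_hasse_qm_psX (fun n => beta n) (ltnSn j)).
rewrite !big_ord_recr /= binn subnn expr0 rmorph1 !mulr1.
under eq_bigr => i _ do rewrite -(IH i (ltn_ord i)).
by move/addrI.
Qed.

End Expansion.

Theorem theorem12 (F : finFieldType) (m : nat) (f : PS F -> laurent F) :
  LC f ->
  let beta : nat -> laurent F := fun n => iter n (@DeltaMinus F m) f (psX F 0) in
  let qm := (#|F| ^ m)%N in
  ktends0 beta /\
  (forall x : PS F,
     kseries (fun n => kmul (beta n) (kexp (ofPS (hasse n x)) qm)) (f x)) /\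
  (forall gamma : nat -> laurent F, ktends0 gamma ->
     (forall x : PS F,
        kseries (fun n => kmul (gamma n) (kexp (ofPS (hasse n x)) qm)) (f x)) ->
     gamma = beta) /\
  (forall n : nat,
     beta n =
     \big[@kadd F/kzero F]_(i < n.+1) \big[@kadd F/kzero F]_(i <= j < n.+1)
        kscale ((-1) ^+ (n - i) * ('C(n, j))%:R)
          (kmul (kexp (bracket F m) (n - j))
                (kmul (f (psX F i)) (ofPS (hasse i (psX F j)))))).
Proof.
move=> f_LC beta qm0; split; first exact: beta_tends0.
split; first exact: beta_expansion.
split; first by move=> gamma _; exact: beta_expansion_unique.
exact: beta_formula.
Qed.
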